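(* For every $n\ge1$, the set $\mathfrak S_n(2413,4213)$ is invariant under the modified Foata--Strehl action: for every $\pi\in\mathfrak S_n(2413,4213)$ and every $S\subseteq[n]$, $\varphi'_S(\pi)\in\mathfrak S_n(2413,4213)$.
   Context: $\mathfrak S_n(2413,4213)$ is the set of permutations of $[n]$ with no subsequence order isomorphic to $2413$ or $4213$. For $\pi\in\mathfrak S_n$ use the convention $\pi_0=\pi_{n+1}=-\infty$; the value $x=\pi_i$ is a double ascent if $\pi_{i-1}<\pi_i<\pi_{i+1}$, a double descent if $\pi_{i-1}>\pi_i>\pi_{i+1}$, a peak if $\pi_{i-1}<\pi_i>\pi_{i+1}$, a valley if $\pi_{i-1}>\pi_i<\pi_{i+1}$. For $x\in[n]$, write $\pi=w_1w_2\,x\,w_3w_4$ where $w_2$ (resp. $w_3$) is the maximal (possibly empty) contiguous factor immediately to the left (resp. right) of $x$ all of whose letters exceed $x$, and set $\varphi_x(\pi)=w_1w_3\,x\,w_2w_4$. Define $\varphi'_x(\pi)=\varphi_x(\pi)$ if $x$ is a double ascent or double descent of $\pi$, and $\varphi'_x(\pi)=\pi$ otherwise (peak or valley). These are commuting involutions; for $S\subseteq[n]$, $\varphi'_S=\prod_{x\in S}\varphi'_x$. *)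

From mathcomp Require Import all_boot.
Set Implicit Arguments. Unset Strict Implicit. Unset Printing Implicit Defensive.

Definition is_perm (n : nat) (s : seq nat) : bool := perm_eq s (iota 1 n).

Definition order_iso (t p : seq nat) : bool :=
  (size t == size p) &&
  [forall i : 'I_(size p), forall j : 'I_(size p),
     (nth 0 t i < nth 0 t j) == (nth 0 p i < nth 0 p j)].

Definition contains (s p : seq nat) : Prop :=
  exists t, subseq t s /\ order_iso t p.

Definition avoids (s p : seq nat) : Prop := ~ contains s p.

Definition Av2413_4213 (n : nat) (s : seq nat) : Prop :=
  is_perm n s /\ avoids s [:: 2; 4; 1; 3] /\ avoids s [:: 4; 2; 1; 3].

(* Foata--Strehl map phi_x: write s = w1 w2 x w3 w4, with w2 (resp. w3) the
   maximal factor immediately left (resp. right) of x with all letters > x;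
   return w1 w3 x w2 w4. *)
Definition phi (x : nat) (s : seq nat) : seq nat :=
  let i := index x s in
  let L := take i s in
  let R := drop i.+1 s in
  let k2 := find (fun y => y <= x) (rev L) in
  let k3 := find (fun y => y <= x) R in
  let w1 := take (size L - k2) L in
  let w2 := drop (size L - k2) L in
  let w3 := take k3 R in
  let w4 := drop k3 R in
  w1 ++ w3 ++ x :: w2 ++ w4.

(* neighbours of x, with the convention pi_0 = pi_{n+1} = -infinity;
   since letters are >= 1, the value 0 plays the role of -infinity *)
Definition left_nb (x : nat) (s : seq nat) : nat :=
  let i := index x s in if i == 0 then 0 else nth 0 s i.-1.
Definition right_nb (x : nat) (s : seq nat) : nat :=
  nth 0 s (index x s).+1.

Definition double_ascent (x : nat) (s : seq nat) : bool :=
  (left_nb x s < x) && (x < right_nb x s).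
Definition double_descent (x : nat) (s : seq nat) : bool :=
  (left_nb x s > x) && (x > right_nb x s).

Definition phi' (x : nat) (s : seq nat) : seq nat :=
  if double_ascent x s || double_descent x s then phi x s else s.

(* phi'_S for a set S of letters, given as a sequence (duplicates and order
   are irrelevant: we apply phi'_x once for each distinct x in S, in
   increasing order of x) *)
Definition phiS (S : seq nat) (s : seq nat) : seq nat :=
  foldr phi' s (sort leq (undup S)).

From mathcomp Require Import all_boot zify.

Set Implicit Arguments.
Unset Strict Implicit.
Unset Printing Implicit Defensive.

(* An occurrence of 2413 or 4213 is a letter c preceded by two larger letters
   u < v and followed by a letter d with u < d < v.  At a double ascent or
   double descent x, phi'_x moves x across a maximal block of letters larger
   than x, bordered on both sides by letters smaller than x (or by the ends of
   the word).  This only changes the relative order of x and the letters of the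
   block, and an occurrence lost in the process is one in which x plays the
   role of c: replacing x by the letter bordering the block on the side where
   x went gives an occurrence again, so pattern avoidance is preserved in both
   directions. *)

Definition before (T : eqType) (s : seq T) (y z : T) : bool :=
  index y s < index z s.

Lemma before_trans (T : eqType) (s : seq T) : transitive (before s).
Proof. by move=> y x z; apply: ltn_trans. Qed.

Lemma before_mem (T : eqType) (s : seq T) y z :
  z \in s -> before s y z -> y \in s.
Proof. by rewrite -!index_mem => z_s yz; apply: ltn_trans yz z_s. Qed.

Section UniqBefore.
Variables (T : eqType) (s : seq T).
Hypothesis s_uniq : uniq s.

Lemma sorted_before : sorted (before s) s.
Proof.
case: s s_uniq => [//|x0 t] t_uniq.
rewrite sorted_pairwise; last exact: before_trans.
by apply/(pairwiseP x0) => i j i_lt j_lt ij; rewrite /before !index_uniq.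
Qed.

Lemma sorted_before_subseq t :
  {subset t <= s} -> sorted (before s) t -> subseq t s.
Proof.
move=> t_s t_sorted.
have -> : t = [seq y <- s | y \in t].
  apply: (irr_sorted_eq (@before_trans _ s)) => //.
  - by move=> y; apply: ltnn.
  - exact: (sorted_filter (@before_trans _ s) _ sorted_before).
  - by move=> y; rewrite mem_filter; case: (boolP (y \in t)) => // /t_s ->.
exact: filter_subseq.
Qed.

End UniqBefore.

(* Membership of u, v and c follows from that of d, by [before_mem]. *)
Definition pattern_2413_4213 (s : seq nat) : Prop :=
  exists u v c d, [/\ [&& c < u, u < d & d < v], d \in s &
                      [&& before s u c, before s v c & before s c d]].

Lemma order_isoP (t p : seq nat) : order_iso t p ->
  size t = size p /\ forall i j, i < size p -> j < size p ->
    (nth 0 t i < nth 0 t j) = (nth 0 p i < nth 0 p j).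
Proof.
case/andP=> /eqP t_size /forallP iso; split=> // i j i_lt j_lt.
by have /eqP := forallP (iso (Ordinal i_lt)) (Ordinal j_lt).
Qed.

Lemma order_iso_2413_4213 u v c d : [&& c < u, u < d & d < v] ->
  order_iso [:: u; v; c; d] [:: 2; 4; 1; 3] /\
  order_iso [:: v; u; c; d] [:: 4; 2; 1; 3].
Proof.
by case/and3P=> *; split; apply/andP; split=> //;
  apply/forallP => -[[|[|[|[|i]]]] ? //];
  apply/forallP => -[[|[|[|[|j]]]] ? //=]; apply/eqP; lia.
Qed.

Lemma pattern_2413_4213P s : uniq s ->
  pattern_2413_4213 s <->
  contains s [:: 2; 4; 1; 3] \/ contains s [:: 4; 2; 1; 3].
Proof.
move=> s_uniq; split.
  case=> u [v [c [d [ucdv d_s /and3P[uc vc cd]]]]].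
  have [iso_uv iso_vu] := order_iso_2413_4213 ucdv.
  have c_s := before_mem d_s cd.
  have [u_s v_s] := (before_mem c_s uc, before_mem c_s vc).
  have sub_s a b : a \in s -> b \in s -> {subset [:: a; b; c; d] <= s}.
    by move=> a_s b_s y; rewrite !inE => /or4P[]/eqP->.
  have [uv | vu] : before s u v \/ before s v u.
    have /and3P[_ ud dv] := ucdv.
    rewrite /before; case: ltngtP => [||/(index_inj 0 u_s v_s) uv];
      [by left | by right |].
    by move: (ltn_trans ud dv); rewrite uv ltnn.
  - left; exists [:: u; v; c; d]; split=> //.
    apply: (sorted_before_subseq s_uniq (sub_s _ _ u_s v_s)).
    by rewrite /= uv vc cd.
  - right; exists [:: v; u; c; d]; split=> //.
    apply: (sorted_before_subseq s_uniq (sub_s _ _ v_s u_s)).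
    by rewrite /= vu uc cd.
case=> -[t [t_s /order_isoP[t_size iso]]];
  case: t t_size t_s iso => [|a [|b [|c [|d [|? ?]]]]] // _ t_s iso;
  have := subseq_sorted (@before_trans _ s) t_s (sorted_before s_uniq);
  rewrite /= andbT => /and3P[ab bc cd];
  have ac : before s a c := ltn_trans ab bc;
  have d_s : d \in s by apply: (mem_subseq t_s); rewrite !inE eqxx !orbT.
- have /= ca := iso 2 0 isT isT; have /= ad := iso 0 3 isT isT.
  have /= db := iso 3 1 isT isT.
  by exists a, b, c, d; rewrite ca ad db d_s ac bc cd.
- have /= cb := iso 2 1 isT isT; have /= bd := iso 1 3 isT isT.
  have /= da := iso 3 0 isT isT.
  by exists b, a, c, d; rewrite cb bd da d_s ac bc cd.
Qed.

Lemma notin_uniq_pivot (T : eqType) (P Q : seq T) y :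
  uniq (P ++ y :: Q) -> y \notin P.
Proof. by rewrite cat_uniq /= => /and3P[_ /norP[]]. Qed.

Lemma index_uniq_pivot (T : eqType) (P Q : seq T) y :
  uniq (P ++ y :: Q) -> index y (P ++ y :: Q) = size P.
Proof. by move/notin_uniq_pivot; apply: index_pivot. Qed.

Section Swap.
Variables (A B C : seq nat) (x : nat).
Local Notation s1 := (A ++ B ++ x :: C).
Local Notation s2 := (A ++ x :: B ++ C).

Lemma perm_swap : perm_eq s1 s2.
Proof. by rewrite perm_cat2l -cat1s perm_catCA. Qed.

Hypotheses (s1_uniq : uniq s1) (B_gt : all (fun y => x < y) B).

Lemma index_swap_pivot : index x s1 = size A + size B /\ index x s2 = size A.
Proof.
split; last by rewrite index_uniq_pivot // -(perm_uniq perm_swap).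
by rewrite catA index_uniq_pivot ?size_cat // -catA.
Qed.

Lemma index_swap (y : nat) :
  [\/ index y s1 < size A /\ index y s2 = index y s1,
      [/\ x < y, size A <= index y s1 < size A + size B &
          index y s2 = (index y s1).+1],
      [/\ y = x, index y s1 = size A + size B & index y s2 = size A] |
      size A + size B < index y s1 /\ index y s2 = index y s1].
Proof.
have [-> | y_x] := eqVneq y x.
  by have [] := index_swap_pivot; constructor 3.
have /norP[xA xB] : ~~ ((x \in A) || (x \in B)).
  by move: s1_uniq; rewrite catA => /notin_uniq_pivot; rewrite mem_cat.
have x_y := allP B_gt y; rewrite -index_mem in x_y.
(* The final [/=] turns the [size] terms produced by [index_cat] and
   [index_mem], typed at [Equality.sort nat], into the ones of the statement;
   lia would otherwise treat them as distinct atoms. *)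
rewrite !index_cat /= !index_cat eq_sym (negbTE y_x) -!index_mem {xA xB y_x} /=.
case: ifP => [|_]; first by constructor 1.
case: ifP => [y_B | _]; last by constructor 4; lia.
by have xy := x_y y_B; constructor 2; split; lia.
Qed.

Local Ltac case_index_swap y :=
  case: (index_swap y) => [[? ?]|[? ? ?]|[? ? ?]|[? ?]].

Lemma before_swap (y z : nat) :
  before s1 y z -> ~~ ((z == x) && (x < y)) -> before s2 y z.
Proof.
rewrite /before => yz.
by case_index_swap y; case_index_swap z; lia.
Qed.

Lemma before_unswap (y z : nat) :
  before s2 y z -> ~~ ((y == x) && (x < z)) -> before s1 y z.
Proof.
rewrite /before => yz.
by case_index_swap y; case_index_swap z; lia.
Qed.

Lemma pattern_swap : head 0 C <= x ->
  pattern_2413_4213 s1 -> pattern_2413_4213 s2.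
Proof.
move=> C_le [u [v [c [d [/and3P[cu ud dv] d_s1 /and3P[uc vc cd]]]]]].
have d_s2 : d \in s2 by rewrite -(perm_mem perm_swap).
have [c_x | c_x] := eqVneq c x; last first.
  exists u, v, c, d; split; [exact/and3P | by [] | apply/and3P; split];
    apply: before_swap; rewrite // ?(negbTE c_x) //; lia.
(* x is the 1 of the occurrence: use the first letter of C instead. *)
subst c; move: uc vc cd; rewrite /before => uc vc cd.
have [x1 x2] := index_swap_pivot.
have [c0 [C' EC]] : exists c0 C', C = c0 :: C'.
  case: (C) d_s1 cd x1 => [|c0 C'] /=; last by exists c0, C'.
  by rewrite -index_mem !size_cat /=; lia.
have c0_le : c0 <= x by rewrite EC in C_le.
have c0_s2 : c0 \in s2 by rewrite EC !(inE, mem_cat) eqxx !orbT.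
have i2c0 : index c0 s2 = (size A + size B).+1.
  have : uniq s2 by rewrite -(perm_uniq perm_swap).
  rewrite -cat_cons catA EC => /index_uniq_pivot ->.
  by rewrite size_cat /= addnS.
have c0_before y : x < y -> index y s1 < index x s1 -> before s2 y c0.
  by rewrite /before i2c0; case_index_swap y; lia.
have c0_d : before s2 c0 d.
  have : index d s2 != index c0 s2.
    by apply: contra_neq (index_inj 0 d_s2 c0_s2) _; apply/eqP; lia.
  by rewrite /before i2c0; case_index_swap d; lia.
exists u, v, c0, d; split=> //; last by rewrite !c0_before ?c0_d //; lia.
by apply/and3P; split=> //; lia.
Qed.

Lemma pattern_unswap : last 0 A <= x ->
  pattern_2413_4213 s2 -> pattern_2413_4213 s1.
Proof.
move=> A_le [u [v [c [d [/and3P[cu ud dv] d_s2 /and3P[uc vc cd]]]]]].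
have d_s1 : d \in s1 by rewrite (perm_mem perm_swap).
have [c_x | c_x] := eqVneq c x; last first.
  exists u, v, c, d; split; [exact/and3P | by [] | apply/and3P; split];
    apply: before_unswap; rewrite // ?(negbTE c_x) //; lia.
(* x is the 1 of the occurrence: use the last letter of A instead. *)
subst c; move: uc vc cd; rewrite /before => uc vc cd.
have [x1 x2] := index_swap_pivot.
have [A' [a0 EA]] : exists A' a0, A = rcons A' a0.
  by case/lastP: (A) uc x2 => [|A' a0] /=; [lia | exists A', a0].
have a0_le : a0 <= x by rewrite EA last_rcons in A_le.
have a0_s1 : a0 \in s1 by rewrite EA mem_cat mem_rcons mem_head.
have i1a0 : (index a0 s1).+1 = size A.
  move: s1_uniq; rewrite EA cat_rcons => /index_uniq_pivot ->.
  by rewrite size_rcons.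
have before_a0 y : x < y -> index y s2 < index x s2 -> before s1 y a0.
  move=> xy yx.
  have y_s1 : y \in s1.
    by rewrite (perm_mem perm_swap) -index_mem size_cat /=; lia.
  have : index y s1 != index a0 s1.
    by apply: contra_neq (index_inj 0 y_s1 a0_s1) _; apply/eqP; lia.
  by rewrite /before; case_index_swap y; lia.
have a0_d : before s1 a0 d.
  by rewrite /before; case_index_swap d; lia.
exists u, v, a0, d; split=> //; last by rewrite !before_a0 ?a0_d //; lia.
by apply/and3P; split=> //; lia.
Qed.

Lemma pattern_swapE : last 0 A <= x -> head 0 C <= x ->
  pattern_2413_4213 s1 <-> pattern_2413_4213 s2.
Proof.
by move=> A_le C_le; split; [apply: pattern_swap | apply: pattern_unswap].
Qed.

End Swap.

Lemma all_take_find (T : Type) (a : pred T) s :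
  all (predC a) (take (find a s) s).
Proof. by elim: s => //= y s IH; case: ifP => //= ->. Qed.

Lemma head_drop_find (T : Type) (a : pred T) x0 s :
  a x0 -> a (head x0 (drop (find a s) s)).
Proof.
by move=> a_x0; elim: s => //= y s IH; case: ifP => //= a_y; rewrite drop0.
Qed.

Lemma find_head (T : Type) (a : pred T) x0 s : a (head x0 s) -> find a s = 0.
Proof. by case: s => //= y s ->. Qed.

Lemma head_rev (T : Type) (x0 : T) s : head x0 (rev s) = last x0 s.
Proof. by case/lastP: s => // s y; rewrite rev_rcons last_rcons. Qed.

Lemma all_gtn_take_find x s :
  all (fun y => x < y) (take (find (fun y => y <= x) s) s).
Proof. by rewrite (eq_all (fun y => ltnNge x y)) all_take_find. Qed.

Lemma head_drop_find_leq x s : head 0 (drop (find (fun y => y <= x) s) s) <= x.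
Proof. exact: (head_drop_find (a := fun y => y <= x)). Qed.

Lemma left_nbE x s : left_nb x s = last 0 (take (index x s) s).
Proof.
rewrite /left_nb; case: (index x s) (index_size x s) => [|i] i_lt.
  by rewrite take0.
by rewrite -nth_last size_takel // nth_take.
Qed.

Lemma right_nbE x s : right_nb x s = head 0 (drop (index x s).+1 s).
Proof. by rewrite /right_nb -nth0 nth_drop addn0. Qed.

Section Phi.
Variables (x : nat) (s : seq nat).
Hypothesis x_s : x \in s.
Local Notation L := (take (index x s) s).
Local Notation R := (drop (index x s).+1 s).

Lemma cat_take_index_drop : s = L ++ x :: R.
Proof. by rewrite -drop_index // cat_take_drop. Qed.

Lemma phi_double_ascent : left_nb x s <= x ->
  exists A B C, [/\ s = A ++ x :: B ++ C, phi x s = A ++ B ++ x :: C,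
    all (fun y => x < y) B, last 0 A <= x & head 0 C <= x].
Proof.
rewrite left_nbE => L_le.
have L_find : find (fun y => y <= x) (rev L) = 0.
  by apply: (@find_head _ _ 0); rewrite head_rev.
set k := find (fun y => y <= x) R.
exists L, (take k R), (drop k R); split.
- by rewrite cat_take_drop -cat_take_index_drop.
- by rewrite /phi /= L_find subn0 take_size drop_size.
- exact: all_gtn_take_find.
- by [].
- exact: head_drop_find_leq.
Qed.

Lemma phi_double_descent : right_nb x s <= x ->
  exists A B C, [/\ s = A ++ B ++ x :: C, phi x s = A ++ x :: B ++ C,
    all (fun y => x < y) B, last 0 A <= x & head 0 C <= x].
Proof.
rewrite right_nbE => R_le.
have R_find : find (fun y => y <= x) R = 0 by apply: (@find_head _ _ 0).
set k := find (fun y => y <= x) (rev L).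
exists (take (size L - k) L), (drop (size L - k) L), R; split.
- by rewrite catA cat_take_drop -cat_take_index_drop.
- by rewrite /phi /= R_find take0 drop0.
- by rewrite -[drop _ L]revK -take_rev all_rev all_gtn_take_find.
- by rewrite -head_rev -drop_rev head_drop_find_leq.
- by [].
Qed.

End Phi.

Lemma phi'_perm_pattern x s : uniq s -> x \in s ->
  perm_eq (phi' x s) s /\
  (pattern_2413_4213 (phi' x s) <-> pattern_2413_4213 s).
Proof.
move=> s_uniq x_s; rewrite /phi'; case: ifP => [|_]; last by split.
case/orP=> /andP[lt_l lt_r].
- have [A [B [C [Es -> B_gt A_le C_le]]]] := phi_double_ascent x_s (ltnW lt_l).
  rewrite Es -(perm_uniq (perm_swap A B C x)) in s_uniq; rewrite Es.
  by split; [exact: perm_swap | exact: pattern_swapE].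
- have [A [B [C [Es -> B_gt A_le C_le]]]] := phi_double_descent x_s (ltnW lt_r).
  rewrite Es in s_uniq *; split; first by rewrite perm_sym perm_swap.
  by symmetry; apply: pattern_swapE.
Qed.

Lemma Av2413_4213E n s :
  Av2413_4213 n s <-> is_perm n s /\ ~ pattern_2413_4213 s.
Proof.
rewrite /Av2413_4213 /avoids.
split=> -[s_perm]; have s_uniq : uniq s by rewrite (perm_uniq s_perm) iota_uniq.
  by move=> [no_2413 no_4213]; split=> // /(pattern_2413_4213P s_uniq)[].
move=> no_pattern; split=> //.
by split=> contains_p; apply: no_pattern; apply/(pattern_2413_4213P s_uniq);
  [left | right].
Qed.

Lemma Av2413_4213_phi' n x s :
  x \in iota 1 n -> Av2413_4213 n s -> Av2413_4213 n (phi' x s).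
Proof.
move=> x_n /Av2413_4213E[s_perm no_pattern].
have s_uniq : uniq s by rewrite (perm_uniq s_perm) iota_uniq.
have x_s : x \in s by rewrite (perm_mem s_perm).
have [phi_perm phi_pattern] := phi'_perm_pattern s_uniq x_s.
apply/Av2413_4213E; split; first exact: perm_trans phi_perm s_perm.
by rewrite phi_pattern.
Qed.

Theorem lemma4p8 (n : nat) (pi S : seq nat) :
  1 <= n ->
  Av2413_4213 n pi ->
  {subset S <= iota 1 n} ->
  Av2413_4213 n (phiS S pi).
Proof.
move=> _ pi_Av S_n; rewrite /phiS.
have : {subset sort leq (undup S) <= iota 1 n}.
  by move=> y; rewrite mem_sort mem_undup; apply: S_n.
elim: (sort leq (undup S)) => [|y S' IH] //= S'_n.
apply: Av2413_4213_phi'; first by apply: S'_n; rewrite mem_head.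
by apply: IH => z z_S'; apply: S'_n; rewrite inE z_S' orbT.
Qed.
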